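(* Let $k$ be a field. For $n\ge 3$ let $C_n$ be the cycle on $n$ vertices, and for $n\ge 1$ let $P_n$ be the path on $n$ vertices. Then $$\deg h_{R/I(C_n)}(t)=\left\lfloor \tfrac{n}{2}\right\rfloor \quad (n\ge 3),$$ and, for $n\ge 1$, $$\deg h_{R/I(P_n)}(t)=\begin{cases}\left\lceil \tfrac n2\right\rceil & \text{if } n\equiv 0,2 \pmod 3,\\ \left\lceil \tfrac n2\right\rceil-1 & \text{if } n\equiv 1\pmod 3.\end{cases}$$
   Context: For a finite simple graph $G$ with vertex set $\{x_1,\dots,x_n\}$, $R=k[x_1,\dots,x_n]$ and the edge ideal is $I(G)=(x_ix_j : \{x_i,x_j\}\in E(G))\subseteq R$. The Hilbert series $H_{R/I(G)}(t)=\sum_{i\ge0}\dim_k (R/I(G))_i\, t^i$ can be written as a reduced rational function $h_{R/I(G)}(t)/(1-t)^{\dim R/I(G)}$ with $h_{R/I(G)}(t)\in\mathbb Z[t]$, $h_{R/I(G)}(1)\neq 0$; $h_{R/I(G)}(t)$ is the $h$-polynomial of $R/I(G)$. *)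

From HB Require Import structures.
From mathcomp Require Import all_boot all_order all_algebra.
Set Implicit Arguments. Unset Strict Implicit. Unset Printing Implicit Defensive.
Import Order.TTheory GRing.Theory Num.Theory.
Local Open Scope ring_scope.

(* Monomials of total degree d in the variables x_0, ..., x_{n-1}:
   exponent vectors m : 'I_n -> nat (exponents bounded by d) with sum d. *)
Definition mon (n d : nat) :=
  {m : {ffun 'I_n -> 'I_d.+1} | (\sum_i (m i : nat) == d)%N}.

(* The degree-d homogeneous component R_d of R = k[x_0..x_{n-1}], written in
   its monomial basis: a polynomial of degree d is its coefficient vector. *)
Definition Rdeg (k : fieldType) (n d : nat) := {ffun mon n d -> k^o}.

Definition monom (k : fieldType) (n d : nat) (m : mon n d) : Rdeg k n d :=
  [ffun m' => (m' == m)%:R].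

Definition mdiv2 (n d : nat) (i j : 'I_n) (m : mon n d) : bool :=
  [forall l : 'I_n, ((i == l) + (j == l) <= (sval m l : nat))%N].

(* The degree-d component I(G)_d of the edge ideal I(G) = (x_i x_j : {i,j} in E):
   it is spanned by the products x^a * x_i x_j with deg a = d - 2, i.e. by the
   degree-d monomials divisible by some x_i x_j with {i,j} an edge. *)
Definition edge_ideal_deg (k : fieldType) (n : nat) (E : rel 'I_n) (d : nat)
  : {vspace Rdeg k n d} :=
  <<[seq monom k m | m in [pred m : mon n d |
       [exists i : 'I_n, exists j : 'I_n, E i j && mdiv2 i j m]]]>>%VS.

Definition hilb (k : fieldType) (n : nat) (E : rel 'I_n) (d : nat) : nat :=
  (\dim (fullv : {vspace Rdeg k n d}) - \dim (edge_ideal_deg k E d))%N.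

(* h(t) = H(t) (1-t)^D as formal power series, coefficientwise:
   h_i = sum_{j <= min(i,D)} (-1)^j C(D,j) HF(i-j). *)
Definition hs_times_pow (HF : nat -> nat) (D i : nat) : int :=
  \sum_(j < D.+1 | (j <= i)%N) (-1) ^+ j * ('C(D, j))%:R * (HF (i - j)%N)%:R.

(* (h, D) is a reduced rational representation H(t) = h(t)/(1-t)^D,
   h in Z[t], h(1) <> 0. *)
Definition reduced_hilb_rep (HF : nat -> nat) (h : {poly int}) (D : nat) : Prop :=
  (forall i : nat, h`_i = hs_times_pow HF D i) /\ h.[1] != 0.

(* "deg h(t) = e", where h is the h-polynomial of the Hilbert series with
   Hilbert function HF: such a reduced representation exists, and any reduced
   representation has numerator of degree e. *)
Definition hpoly_deg_is (HF : nat -> nat) (e : nat) : Prop :=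
  (exists h D, reduced_hilb_rep HF h D) /\
  (forall h D, reduced_hilb_rep HF h D -> (size h).-1 = e).

Definition cycle_rel (n : nat) : rel 'I_n :=
  fun i j => ((j : nat) == (i.+1 %% n)%N) || ((i : nat) == (j.+1 %% n)%N).

Definition path_rel (n : nat) : rel 'I_n :=
  fun i j => ((j : nat) == i.+1) || ((i : nat) == j.+1).
Arguments cycle_rel n : clear implicits.
Arguments path_rel n : clear implicits.

(* The Hilbert function of R/I(G) in degree d counts the degree-d monomials whose
   support is an independent set of G.  Sorting them by divisibility by x_v gives
   H_G(t) = H_(G-v)(t) + t/(1-t) H_(G-N[v])(t).  Deleting an end vertex of the path
   P_L shows that (1-t)^(ceil(L/2)) H_(P_L)(t) is the polynomial h_L given by
   h_0 = h_1 = 1 and h_(L+2) = (1-t)^(L mod 2) h_(L+1) + t h_L, and deleting a vertex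
   of C_n gives (1-t)^(floor(n/2)) H_(C_n)(t) = h_(n-1) + t h_(n-3).  These numerators
   are positive at t = 1, so the representations are reduced, and a reduced
   representation is unique.  The coefficient of h_L in degree ceil(L/2) is
   antiperiodic of period 6 in L and vanishes exactly when L = 1 (mod 3); then the
   coefficient in degree ceil(L/2) - 1 is +-(floor(L/3) + 1).  For the cycle the top
   coefficient is a sum of two top coefficients of paths, which never vanishes. *)

From HB Require Import structures.
From mathcomp Require Import all_boot all_order all_algebra zify ring.
Set Implicit Arguments. Unset Strict Implicit. Unset Printing Implicit Defensive.
Import Order.TTheory GRing.Theory Num.Theory.
Open Scope ring_scope.

Lemma free_monom_seq (k : fieldType) n d (s : seq (mon n d)) :
  uniq s -> free (map (@monom k n d) s).
Proof.
move=> s_uniq; apply/(@freeP _ _ _ (in_tuple _)) => c sum_c0 i.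
have lt_i : (i < size s)%N by rewrite -(size_map (@monom k n d)) ltn_ord.
have x0 : mon n d by case: s s_uniq c sum_c0 i lt_i.
have := congr1 (fun f : Rdeg k n d => f (nth x0 s i)) sum_c0.
rewrite sum_ffunE ffunE (bigD1 i) //= big1 => [|j ne_ji].
  by rewrite addr0 ffunE (nth_map x0) // ffunE eqxx -[_ *: _]/(c i * 1) mulr1.
have lt_j : (j < size s)%N by rewrite -(size_map (@monom k n d)) ltn_ord.
rewrite ffunE (nth_map x0) // ffunE nth_uniq // val_eqE eq_sym (negbTE ne_ji).
by rewrite -[_ *: _]/(c j * 0) mulr0.
Qed.

Lemma leq_term_sum (I : finType) (F : I -> nat) i : (F i <= \sum_j F j)%N.
Proof. by rewrite (bigD1 i) //= leq_addr. Qed.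

Section StandardMonomials.
Variables (n : nat) (E : rel 'I_n).
Hypothesis E_irr : irreflexive E.

Definition mexp d (m : mon n d) (x : 'I_n) : nat := sval m x.
Definition msupp d (m : mon n d) : {set 'I_n} := [set x | mexp m x != 0%N].
Definition stable (A : {set 'I_n}) := [forall i in A, forall j in A, ~~ E i j].
Definition nbhd (v : 'I_n) : {set 'I_n} := [set u | E v u || E u v].

(* The Hilbert function of the subgraph induced on S. *)
Definition nstd (S : {set 'I_n}) d :=
  #|[set m : mon n d | stable (msupp m) & msupp m \subset S]|.

Lemma sum_mexp d (m : mon n d) : (\sum_x mexp m x)%N = d.
Proof. exact/eqP/(svalP m). Qed.

Lemma mexp_inj d (m1 m2 : mon n d) : mexp m1 =1 mexp m2 -> m1 = m2.
Proof. by move=> eq_m; apply/val_inj/ffunP => x; apply/val_inj/eq_m. Qed.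

Lemma mon_of_subproof d (g : 'I_n -> nat) : (\sum_i g i)%N = d ->
  (\sum_i (([ffun i => inord (g i)] : {ffun 'I_n -> 'I_d.+1}) i : nat) == d)%N.
Proof.
move=> sum_g; rewrite (eq_bigr g) ?sum_g // => i _.
by rewrite ffunE inordK // ltnS -sum_g leq_term_sum.
Qed.

Definition mon_of d (g : 'I_n -> nat) (sum_g : (\sum_i g i)%N = d) : mon n d :=
  exist (fun m : {ffun _ -> _} => _) _ (mon_of_subproof sum_g).

Lemma mexp_mon_of d g (sum_g : (\sum_i g i)%N = d) : mexp (mon_of sum_g) =1 g.
Proof. by move=> x; rewrite /mexp /= ffunE inordK // ltnS -sum_g leq_term_sum. Qed.

Lemma edge_divE d (m : mon n d) :
  [exists i, exists j, E i j && mdiv2 i j m] = ~~ stable (msupp m).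
Proof.
apply/existsP/forall_inPn => [[i /existsP[j /andP[Eij /forallP div_m]]]|].
  have supp_l l : l \in [set i; j] -> l \in msupp m.
    rewrite !inE -lt0n => l_ij; apply: leq_trans (div_m l).
    by case/orP: l_ij => /eqP eq_l; subst l; rewrite eqxx ?addn1.
  exists i; first by apply: supp_l; rewrite !inE eqxx.
  by apply/forall_inPn; exists j; rewrite ?negbK ?supp_l // !inE eqxx orbT.
case=> i supp_i /forall_inPn[j supp_j /negPn Eij].
exists i; apply/existsP; exists j; rewrite Eij; apply/forallP => l.
have ne_ij : i != j by apply: contraTneq Eij => ->; rewrite E_irr.
move: supp_i supp_j; rewrite !inE -!lt0n.
case: (eqVneq i l) => [<- supp_i _|_ _]; first by rewrite eq_sym (negbTE ne_ij).
by case: (eqVneq j l) => [<-|].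
Qed.

Lemma hilb_nstd (k : fieldType) d : hilb k E d = nstd setT d.
Proof.
rewrite /hilb dimvf /dim /= muln1 /edge_ideal_deg.
set P := [pred m : mon n d | _].
have /eqP := free_monom_seq k (enum_uniq P); rewrite /image_mem => ->.
rewrite size_map -cardE -(cardC P) addKn; apply: eq_card => m.
by rewrite !inE /= edge_divE negbK subsetT andbT.
Qed.

Lemma stableS (A B : {set 'I_n}) : A \subset B -> stable B -> stable A.
Proof.
move=> sAB /forall_inP stB; apply/forall_inP => i Ai; apply/forall_inP => j Aj.
by have /forall_inP := stB i (subsetP sAB i Ai); apply; apply: (subsetP sAB).
Qed.

Lemma stable_setU1 v (A : {set 'I_n}) :
  stable (v |: A) = stable A && [disjoint A & nbhd v].
Proof.
apply/idP/andP => [st_vA|[st_A dis_A]].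
  split; first exact: stableS (subsetUr _ _) st_vA.
  apply/pred0P => u /=; apply/andP => -[Au]; rewrite inE.
  have st u1 u2 : u1 \in v |: A -> u2 \in v |: A -> ~~ E u1 u2.
    by move=> /(forall_inP st_vA) /forall_inP; apply.
  by apply/negP/norP; split; apply: st; rewrite !inE ?eqxx ?Au ?orbT.
apply/forall_inP => i /setU1P[->|Ai]; apply/forall_inP => j /setU1P.
  case=> [->|Aj]; first by rewrite E_irr.
  by have := disjointFr dis_A Aj; rewrite inE => /norP[].
case=> [->|Aj]; first by have := disjointFr dis_A Ai; rewrite inE => /norP[].
by have /forall_inP := forall_inP st_A i Ai; apply.
Qed.

Lemma sum_indicator (v : 'I_n) : (\sum_x (x == v : nat))%N = 1%N.
Proof. by rewrite (bigD1 v) //= eqxx big1 // => x /negbTE ->. Qed.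

Lemma mulx_subproof v d (m : mon n d) : (\sum_x (mexp m x + (x == v)))%N = d.+1.
Proof. by rewrite big_split /= sum_mexp sum_indicator addn1. Qed.

Definition mulx v d (m : mon n d) : mon n d.+1 := mon_of (mulx_subproof v m).

Lemma mexp_mulx v d (m : mon n d) x : mexp (mulx v m) x = (mexp m x + (x == v))%N.
Proof. exact: mexp_mon_of. Qed.

Lemma msupp_mulx v d (m : mon n d) : msupp (mulx v m) = v |: msupp m.
Proof.
apply/setP => x; rewrite !inE mexp_mulx addn_eq0 negb_and orbC.
by case: (eqVneq x v).
Qed.

Lemma mulx_inj v d : injective (@mulx v d).
Proof.
move=> m1 m2 eq_m; apply: mexp_inj => x.
by apply/(@addIn (x == v)); rewrite -!mexp_mulx eq_m.
Qed.

Lemma mulx_onto v d (m' : mon n d.+1) : v \in msupp m' -> exists m, m' = mulx v m.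
Proof.
rewrite inE -lt0n => m'v.
have sum_m : (\sum_x (mexp m' x - (x == v)))%N = d.
  apply/(@addIn 1%N).
  rewrite [RHS]addn1 -[RHS](sum_mexp m') -(sum_indicator v) -big_split.
  by apply: eq_bigr => x _ /=; rewrite subnK //; case: (eqVneq x v) => [->|].
exists (mon_of sum_m); apply: mexp_inj => x.
by rewrite mexp_mulx mexp_mon_of subnK //; case: (eqVneq x v) => [->|].
Qed.

Lemma nstd0 (S : {set 'I_n}) : nstd S 0 = 1%N.
Proof.
have mexp0 (m : mon n 0) x : mexp m x = 0%N.
  by apply/eqP; have := leq_term_sum (mexp m) x; rewrite sum_mexp leqn0.
have sum0 : (\sum_(x < n) 0)%N = 0%N by rewrite big1.
apply: (eq_card1 (x := mon_of sum0)) => m; rewrite !inE.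
have -> : msupp m = set0 by apply/setP => x; rewrite !inE mexp0.
rewrite sub0set andbT; apply/idP/eqP => [_|_]; last by apply/forall_inP => x; rewrite inE.
by apply: mexp_inj => x; rewrite mexp_mon_of mexp0.
Qed.

Lemma nstd_set0 d : nstd set0 d.+1 = 0%N.
Proof.
apply: eq_card0 => m; rewrite !inE subset0; apply/negP => /andP[_ /eqP supp0].
suff : (\sum_x mexp m x)%N = 0%N by rewrite sum_mexp.
by apply: big1 => x _; have := in_set0 x; rewrite -supp0 inE => /negbFE/eqP.
Qed.

Lemma nstd_del (S : {set 'I_n}) v d : v \in S ->
  nstd S d.+1 = (nstd (S :\ v) d.+1 + nstd (S :\: nbhd v) d)%N.
Proof.
move=> Sv; rewrite /nstd -(cardsID [set m | v \in msupp m]) addnC; congr addn.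
  by apply: eq_card => m; rewrite !inE subsetD1 inE [RHS]andbA [RHS]andbC.
rewrite -[RHS](card_imset _ (@mulx_inj v d)); apply: eq_card => m'; rewrite !inE.
apply/idP/imsetP => [/andP[/andP[st_m' sub_m'] m'v]|[m]].
  have [m def_m'] : exists m, m' = mulx v m by apply: mulx_onto; rewrite inE.
  exists m => //; move: st_m' sub_m'.
  rewrite inE subsetD def_m' msupp_mulx stable_setU1 subUset.
  by move=> /andP[-> ->] /andP[_ ->].
rewrite inE subsetD => /andP[st_m /andP[sub_m dis_m]] ->.
rewrite msupp_mulx stable_setU1 subUset sub1set st_m dis_m Sv sub_m.
by rewrite mexp_mulx eqxx addn1.
Qed.

End StandardMonomials.

Section TruncatedSeries.
Variable R : nzRingType.

Definition eq_modXn N (p q : {poly R}) := forall i, (i < N)%N -> p`_i = q`_i.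

Lemma eq_modXn_trans N p q r : eq_modXn N p q -> eq_modXn N q r -> eq_modXn N p r.
Proof. by move=> pq qr i lt_iN; rewrite pq // qr. Qed.

Lemma eq_modXnD N p1 p2 q1 q2 :
  eq_modXn N p1 q1 -> eq_modXn N p2 q2 -> eq_modXn N (p1 + p2) (q1 + q2).
Proof. by move=> pq1 pq2 i lt_iN; rewrite !coefD pq1 // pq2. Qed.

Lemma eq_modXnMl N r p q : eq_modXn N p q -> eq_modXn N (r * p) (r * q).
Proof.
move=> pq i lt_iN; rewrite !coefM; apply: eq_bigr => j _.
by rewrite pq // (leq_ltn_trans (leq_subr _ _) lt_iN).
Qed.

Lemma eq_modXn_subX N p q : eq_modXn N p (q + 'X * p) -> eq_modXn N ((1 - 'X) * p) q.
Proof. by move=> pq i lt_iN; rewrite mulrBl mul1r coefB pq // coefD addrK. Qed.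

End TruncatedSeries.

Lemma size_pred_eq (R : nzSemiRingType) (p : {poly R}) e :
  p`_e != 0 -> (forall j, (e < j)%N -> p`_j = 0) -> (size p).-1 = e.
Proof.
move=> pe_neq0 p_gt; have le_size : (size p <= e.+1)%N by apply/leq_sizeP.
have lt_size : (e < size p)%N.
  by rewrite ltnNge; apply: contra pe_neq0 => /leq_sizeP/(_ e (leqnn e)) ->.
lia.
Qed.

Lemma coef_1subX_exp (R : comNzRingType) D j :
  ((1 - 'X) ^+ D : {poly R})`_j = (-1) ^+ j * 'C(D, j)%:R.
Proof.
elim: D j => [|D IH] [|j]; rewrite ?expr0 ?coef1 /= ?mul1r ?mulr0 //.
  by rewrite exprS mulrBl mul1r coefB coefXM IH /= !bin0 expr0 mul1r subr0.
by rewrite exprS mulrBl mul1r coefB coefXM /= !IH binS natrD exprS; ring.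
Qed.

Lemma hs_times_powE (HF : nat -> nat) D i N : (i < N)%N ->
  hs_times_pow HF D i = ((1 - 'X) ^+ D * \poly_(d < N) (HF d)%:R : {poly int})`_i.
Proof.
move=> lt_iN; rewrite coefM /hs_times_pow.
rewrite (big_ord_widen_cond (D.+1 + i.+1) (fun j => j <= i)%N
  (fun j : nat => (-1) ^+ j * 'C(D, j)%:R * (HF (i - j)%N)%:R : int)) ?leq_addr //.
rewrite (big_ord_widen (D.+1 + i.+1) (fun j : nat => ((1 - 'X) ^+ D : {poly int})`_j *
  (\poly_(d < N) (HF d)%:R : {poly int})`_(i - j))) ?leq_addl //.
rewrite big_mkcond [RHS]big_mkcond; apply: eq_bigr => j _ /=.
rewrite coef_1subX_exp coef_poly [(j < i.+1)%N]ltnS; have [_|//] := leqP j i.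
rewrite (leq_ltn_trans (leq_subr _ _) lt_iN) /=.
by have [//|lt_Dj] := ltnP j D.+1; rewrite bin_small // mulr0n mulr0 mul0r.
Qed.

Lemma one_subX_neq0 : (1 - 'X : {poly int}) != 0.
Proof.
apply/eqP => /(congr1 (horner^~ 0)).
by rewrite !hornerE => /eqP; rewrite oner_eq0.
Qed.

Lemma reduced_hilb_rep_modXn HF h D N : reduced_hilb_rep HF h D ->
  eq_modXn N ((1 - 'X) ^+ D * \poly_(d < N) (HF d)%:R) h.
Proof. by case=> coef_h _ i lt_iN; rewrite coef_h (hs_times_powE _ _ lt_iN). Qed.

Lemma reduced_hilb_rep_cross HF h D h' D' :
  reduced_hilb_rep HF h D -> reduced_hilb_rep HF h' D' ->
  (1 - 'X) ^+ D' * h = (1 - 'X) ^+ D * h'.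
Proof.
move=> rep rep'; apply/polyP => i.
rewrite -(eq_modXnMl _ (reduced_hilb_rep_modXn (N := i.+1) rep)) //.
by rewrite -(eq_modXnMl _ (reduced_hilb_rep_modXn (N := i.+1) rep')) // mulrCA.
Qed.

Lemma reduced_hilb_rep_unique HF h D h' D' :
  reduced_hilb_rep HF h D -> reduced_hilb_rep HF h' D' -> h = h'.
Proof.
wlog le_DD' : h D h' D' / (D <= D')%N.
  move=> wlog rep rep'; have [le|/ltnW le] := leqP D D'; first exact: wlog rep rep'.
  by symmetry; apply: wlog rep' rep.
move=> rep rep'; have := reduced_hilb_rep_cross rep rep'.
rewrite -(subnK le_DD') exprD -mulrA mulrCA => eq_h.
have {eq_h} h'E := mulfI (expf_neq0 D one_subX_neq0) eq_h.
case: (D' - D)%N h'E => [|k] h'E; first by rewrite -h'E expr0 mul1r.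
case: rep' => _; rewrite -h'E hornerM horner_exp !hornerE subrr expr0n mul0r.
by rewrite eqxx.
Qed.

Lemma hpoly_deg_isP HF h D e :
    (forall N, eq_modXn N ((1 - 'X) ^+ D * \poly_(d < N) (HF d)%:R : {poly int}) h) ->
  h.[1] != 0 -> (size h).-1 = e -> hpoly_deg_is HF e.
Proof.
move=> h_series h1 size_h; have rep : reduced_hilb_rep HF h D.
  by split=> // i; rewrite (hs_times_powE _ _ (ltnSn i)) h_series.
by split=> [|h' D' rep']; [exists h, D | rewrite -(reduced_hilb_rep_unique rep rep')].
Qed.

Definition path_dim L := (L.+1 %/ 2)%N.

Fixpoint path_hpoly_pair L : {poly int} * {poly int} :=
  if L is L'.+1 then
    let p := path_hpoly_pair L' in (p.2, (1 - 'X) ^+ odd L' * p.2 + 'X * p.1)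
  else (1, 1).

Definition path_hpoly L := (path_hpoly_pair L).1.

Lemma path_hpolySS L :
  path_hpoly L.+2 = (1 - 'X) ^+ odd L * path_hpoly L.+1 + 'X * path_hpoly L.
Proof. by []. Qed.

Section HilbertSeries.
Variables (n : nat) (E : rel 'I_n).
Hypothesis E_irr : irreflexive E.

Definition hser (S : {set 'I_n}) N : {poly int} := \poly_(d < N) (nstd E S d)%:R.

Lemma hser_set0 N : eq_modXn N (hser set0 N) 1.
Proof.
move=> [|i] lt_iN; rewrite coef_poly lt_iN coef1 /=; first by rewrite nstd0.
by rewrite nstd_set0.
Qed.

Lemma hser_del v (S : {set 'I_n}) N : v \in S ->
  eq_modXn N (hser S N) (hser (S :\ v) N + 'X * hser (S :\: nbhd E v) N).
Proof.
move=> Sv [|i] lt_iN; rewrite coefD coefXM !coef_poly lt_iN /=.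
  by rewrite !nstd0 addr0.
by rewrite (nstd_del E_irr _ Sv) (ltnW lt_iN) natrD.
Qed.

Lemma hser_del_closed v (S : {set 'I_n}) N : v \in S ->
  eq_modXn N ((1 - 'X) * hser S N)
    ((1 - 'X) * hser (S :\ v) N + 'X * hser (S :\: nbhd E v :\ v) N).
Proof.
move=> Sv; set T := S :\: nbhd E v.
have Tv : v \in T by rewrite !inE E_irr Sv.
have isolated_v : T :\: nbhd E v = T by rewrite setDDl setUid.
have := hser_del (N := N) Tv; rewrite isolated_v => /eq_modXn_subX delT.
apply: eq_modXn_trans (eq_modXnMl (1 - 'X) (hser_del (N := N) Sv)) _.
rewrite mulrDr mulrA [(1 - 'X) * 'X]mulrC -mulrA.
by apply: eq_modXnD => [//|]; apply: eq_modXnMl.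
Qed.

Lemma poly_hilb (k : fieldType) N : \poly_(d < N) (hilb k E d)%:R = hser setT N.
Proof. by apply: eq_poly => d _; rewrite (hilb_nstd E_irr). Qed.

Definition segment a L : {set 'I_n} := [set i : 'I_n | a <= i < a + L]%N.

Definition path_on (A : {set 'I_n}) :=
  {in A &, forall i j, E i j = (j == i.+1 :> nat) || (i == j.+1 :> nat)}.

Lemma hser_segment a L : (a + L <= n)%N -> path_on (segment a L) ->
  forall N, eq_modXn N ((1 - 'X) ^+ path_dim L * hser (segment a L) N) (path_hpoly L).
Proof.
elim/ltn_ind: L => -[_ _ _ N|[_ le_a1n _ N|L IH le_n path_E N]].
- rewrite (_ : segment a 0 = set0) ?expr0 ?mul1r; first exact: hser_set0.
  by apply/setP => i; rewrite !inE; lia.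
- have lt_an : (a < n)%N by lia.
  pose v := Ordinal lt_an.
  have Iv : v \in segment a 1 by rewrite inE /=; lia.
  have I1 : segment a 1 :\ v = set0 by apply/setP => i; rewrite !inE -val_eqE /=; lia.
  apply: eq_modXn_trans (hser_del_closed (N := N) Iv) _.
  rewrite setDDl setUC -setDDl I1 set0D.
  apply: eq_modXn_trans (eq_modXnD (eq_modXnMl _ (hser_set0 (N := N)))
                                   (eq_modXnMl _ (hser_set0 (N := N)))) _.
  by rewrite !mulr1 subrK.
- have lt_vn : (a + L.+1 < n)%N by lia.
  pose v := Ordinal lt_vn.
  have Iv : v \in segment a L.+2 by rewrite inE /=; lia.
  have I1 : segment a L.+2 :\ v = segment a L.+1.
    by apply/setP => i; rewrite !inE -val_eqE /=; lia.
  have I2 : segment a L.+2 :\: nbhd E v :\ v = segment a L.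
    rewrite setDDl setUC -setDDl I1; apply/setP => i; rewrite in_setD [in RHS]inE.
    case: (boolP (i \in segment a L.+1)) => Ii; rewrite ?andbF; last first.
      by move: Ii; rewrite inE; lia.
    have Ii' : i \in segment a L.+2 by move: Ii; rewrite !inE; lia.
    by rewrite inE !path_E //= andbT; move: Ii; rewrite inE; lia.
  have sub_E K : (K <= L.+2)%N -> path_on (segment a K).
    by move=> le_K; apply: sub_in2 path_E => i; rewrite !inE; lia.
  have IH1 := IH L.+1 (ltnSn _) ltac:(lia) (sub_E _ (leqnSn _)) N.
  have IH0 := IH L (ltnW (ltnSn _)) ltac:(lia) (sub_E _ (leqW (leqnSn _))) N.
  have [dimSS dimS] : path_dim L.+2 = (path_dim L).+1 /\
                      (path_dim L).+1 = (odd L + path_dim L.+1)%N by rewrite /path_dim; lia.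
  rewrite dimSS exprSr -mulrA.
  apply: eq_modXn_trans (eq_modXnMl _ (hser_del_closed (N := N) Iv)) _.
  rewrite I1 I2 path_hpolySS mulrDr mulrA -exprSr dimS exprD -mulrA.
  rewrite [_ * ('X * _)]mulrCA.
  by apply: eq_modXnD; apply: eq_modXnMl.
Qed.

End HilbertSeries.

Arguments segment {n}.

Lemma coef_path_hpolySS L j : (path_hpoly L.+2)`_j =
  (path_hpoly L.+1)`_j - (if odd L && (j != 0%N) then (path_hpoly L.+1)`_j.-1 else 0)
  + (if j == 0%N then 0 else (path_hpoly L)`_j.-1).
Proof.
rewrite path_hpolySS coefD coefXM; case: (odd L) => /=.
  by rewrite expr1 mulrBl mul1r coefB coefXM; case: eqP.
by rewrite expr0 mul1r subr0.
Qed.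

Lemma coef_path_hpoly_gt L j : (path_dim L < j)%N -> (path_hpoly L)`_j = 0.
Proof.
elim/ltn_ind: L j => -[|[|L]] IH j lt_dim_j; try by rewrite coef1; case: j lt_dim_j.
have j_gt0 : j != 0%N by rewrite -lt0n; apply: leq_ltn_trans lt_dim_j.
rewrite /path_dim in lt_dim_j.
rewrite coef_path_hpolySS (negbTE j_gt0) andbT (IH L.+1) ?(IH L) ?addr0 ?sub0r //.
all: try by rewrite /path_dim; lia.
by case: ifP => // odd_L; rewrite (IH L.+1) ?oppr0 // /path_dim; lia.
Qed.

Definition path_top L := (path_hpoly L)`_(path_dim L).
Definition path_subtop L := (path_hpoly L)`_(path_dim L).-1.

Lemma path_topSS L :
  path_top L.+2 = (if odd L then - path_top L.+1 else path_top L.+1) + path_top L.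
Proof.
rewrite /path_top coef_path_hpolySS.
have [-> ->] : (path_dim L.+2 == 0%N) = false /\ (path_dim L.+2).-1 = path_dim L.
  by rewrite /path_dim; lia.
rewrite andbT; case: (boolP (odd L)) => odd_L; last first.
  by rewrite subr0; congr (_`_ _ + _); rewrite /path_dim; lia.
rewrite coef_path_hpoly_gt ?sub0r; last by rewrite /path_dim; lia.
by congr (- _`_ _ + _); rewrite /path_dim; lia.
Qed.

Lemma path_subtopSS L : (0 < L)%N -> path_subtop L.+2 =
  (if odd L then path_top L.+1 - path_subtop L.+1 else path_subtop L.+1) + path_subtop L.
Proof.
move=> L_gt0; rewrite /path_subtop /path_top coef_path_hpolySS.
have [-> ->] : (path_dim L.+2).-1 = path_dim L /\ (path_dim L == 0%N) = false.
  by rewrite /path_dim; lia.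
rewrite andbT; case: (boolP (odd L)) => odd_L; last first.
  by rewrite subr0; congr (_`_ _ + _); rewrite /path_dim; lia.
by congr (_`_ _ - _`_ _ + _); rewrite /path_dim; lia.
Qed.

Lemma path_top_antiperiodic L : path_top (L + 6) = - path_top L.
Proof.
rewrite !addnS addn0 !path_topSS /=.
by case: (odd L); rewrite /=; ring.
Qed.

Lemma path_subtop_shift L : (0 < L)%N -> path_subtop (L + 6) =
  path_top L - path_subtop L + (if odd L then -2 else 2) * path_top L.+1.
Proof.
move=> L_gt0; rewrite !addnS addn0 !path_subtopSS // !path_topSS /=.
by case: (odd L); rewrite /=; ring.
Qed.

Lemma path_top_6q q r : path_top (6 * q + r) = (-1) ^+ q * path_top r.
Proof.
elim: q => [|q IH]; first by rewrite mul1r.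
by rewrite mulnS -addnA [(6 + _)%N]addnC path_top_antiperiodic IH exprS mulN1r mulNr.
Qed.

Lemma path_top_small r : (r < 6)%N -> path_top r = [:: 1; 0; 1; -1; 0; -1]`_r.
Proof.
have top0 : path_top 0 = 1 by rewrite /path_top coef1.
have top1 : path_top 1 = 0 by rewrite /path_top coef1.
have top2 : path_top 2 = 1 by rewrite path_topSS top1 top0 add0r.
have top3 : path_top 3 = -1 by rewrite path_topSS top2 top1 addr0.
have top4 : path_top 4 = 0 by rewrite path_topSS top3 top2 addNr.
have top5 : path_top 5 = -1 by rewrite path_topSS top4 top3 oppr0 add0r.
by case: r => [|[|[|[|[|[|r]]]]]].
Qed.

Lemma path_top_eq0 L : (path_top L == 0) = (L %% 3 == 1)%N.
Proof.
have -> : (L %% 3 = (L %% 6) %% 3)%N by rewrite modn_dvdm.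
rewrite {1}(divn_eq L 6) mulnC path_top_6q mulf_eq0 signr_eq0 /=.
rewrite path_top_small ?ltn_pmod //.
by case: (L %% 6)%N (ltn_pmod L (isT : 0 < 6)%N) => [|[|[|[|[|[|r]]]]]].
Qed.

Lemma path_subtop_6q q :
  path_subtop (6 * q + 1) = (-1) ^+ q * (2 * q + 1)%:R /\
  path_subtop (6 * q + 4) = (-1) ^+ q * (2 * q + 2)%:R.
Proof.
elim: q => [|q [IH1 IH4]].
  have sub1 : path_subtop 1 = 1 by rewrite /path_subtop coef1.
  have sub2 : path_subtop 2 = 1 by rewrite /path_subtop coef_path_hpolySS coef1.
  have sub3 : path_subtop 3 = 1.
    by rewrite path_subtopSS // sub2 sub1 path_top_small // subrr add0r.
  by rewrite path_subtopSS // sub3 sub2.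
have shift r : path_subtop (6 * q.+1 + r) = path_subtop (6 * q + r + 6).
  by rewrite mulnS -addnA [(6 + _)%N]addnC.
have top r : (r < 6)%N -> path_top (6 * q + r) = (-1) ^+ q * [:: 1; 0; 1; -1; 0; -1]`_r.
  by move=> lt_r6; rewrite path_top_6q path_top_small.
rewrite !shift !path_subtop_shift ?addn_gt0 ?orbT // -!addnS !top //= IH1 IH4.
have [-> ->] : odd (6 * q + 1) = true /\ odd (6 * q + 4) = false by lia.
by rewrite exprS; split; ring.
Qed.

Lemma path_subtop_neq0 L : (L %% 3 == 1)%N -> path_subtop L != 0.
Proof.
move=> L_mod3; rewrite (divn_eq L 6) mulnC.
have [] : (L %% 6 = 1 \/ L %% 6 = 4)%N by lia.
all: move=> ->; have [sub1 sub4] := path_subtop_6q (L %/ 6).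
all: by rewrite ?sub1 ?sub4 mulf_neq0 ?signr_eq0 // pnatr_eq0 ?addn1 ?addn2.
Qed.

Lemma cycle_top_neq0 L : path_top L.+2 + path_top L != 0.
Proof.
rewrite (divn_eq L 6) mulnC -!addnS !path_top_6q -mulrDr mulf_neq0 ?signr_eq0 //.
have [top6 top7] : path_top 6 = -1 /\ path_top 7 = 0.
  by rewrite (path_top_6q 1 0) (path_top_6q 1 1) !path_top_small.
case: (L %% 6)%N (ltn_pmod L (isT : 0 < 6)%N) => [|[|[|[|[|[|r]]]]]] //= _.
all: by rewrite ?top6 ?top7 ?path_top_small.
Qed.

Lemma size_path_hpoly L :
  (size (path_hpoly L)).-1 = if (L %% 3 == 1)%N then (path_dim L).-1 else path_dim L.
Proof.
case: ifP => L_mod3; apply: size_pred_eq.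
- exact: path_subtop_neq0.
- move=> j lt_j; have /eqP top0 : path_top L == 0 by rewrite path_top_eq0.
  have [->|ne_j] := eqVneq j (path_dim L); first exact: top0.
  by apply: coef_path_hpoly_gt; lia.
- by rewrite -/(path_top L) path_top_eq0 L_mod3.
- exact: coef_path_hpoly_gt.
Qed.

Lemma path_hpoly_at1_gt0 L : 0 < (path_hpoly L).[1].
Proof.
elim/ltn_ind: L => -[|[|L]] IH; rewrite ?hornerC //.
rewrite path_hpolySS !hornerE subrr expr0n; case: (odd L) => /=.
  by rewrite mul0r add0r IH.
by rewrite mul1r addr_gt0 ?IH.
Qed.

Lemma path_rel_irr n : irreflexive (path_rel n).
Proof. by move=> i; rewrite /path_rel; lia. Qed.

Lemma hpoly_deg_path (k : fieldType) n :
  hpoly_deg_is (@hilb k n (path_rel n))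
    (if (n %% 3 == 1)%N then (n.+1 %/ 2).-1 else n.+1 %/ 2)%N.
Proof.
apply: (hpoly_deg_isP (D := path_dim n)) _ _ (size_path_hpoly n).
- move=> N; rewrite (poly_hilb (@path_rel_irr n)).
  have -> : [set: 'I_n] = segment 0 n by apply/setP => i; rewrite !inE add0n ltn_ord.
  by apply: hser_segment; rewrite ?add0n //; exact: path_rel_irr.
- by rewrite gt_eqF ?path_hpoly_at1_gt0.
Qed.

Lemma cycle_relE n (i j : 'I_n) : cycle_rel n i j =
  [|| (j : nat) == i.+1, (i.+1 == n) && ((j : nat) == 0),
      (i : nat) == j.+1 | (j.+1 == n) && ((i : nat) == 0)]%N.
Proof.
have succ_mod (l : 'I_n) : (l.+1 %% n = if l.+1 == n then 0 else l.+1)%N.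
  case: eqP => [->|ne]; first by rewrite modnn.
  by rewrite modn_small //; have := ltn_ord l; lia.
rewrite /cycle_rel !succ_mod; have := ltn_ord i; have := ltn_ord j.
by case: ifP => eq_i; case: ifP => eq_j; lia.
Qed.

Lemma cycle_rel_irr n : (2 < n)%N -> irreflexive (cycle_rel n).
Proof. by move=> n_gt2 i; rewrite cycle_relE; have := ltn_ord i; lia. Qed.

Lemma hpoly_deg_cycle (k : fieldType) n : (3 <= n)%N ->
  hpoly_deg_is (@hilb k n (cycle_rel n)) (n %/ 2)%N.
Proof.
case: n => [|[|[|L]]] // n_gt2; have irr := cycle_rel_irr n_gt2.
pose v : 'I_L.+3 := ord_max.
have del_v : [set: 'I_L.+3] :\ v = segment 0 L.+2.
  by apply/setP => i; rewrite !inE -val_eqE /=; have := ltn_ord i; lia.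
have del_closed_v : [set: 'I_L.+3] :\: nbhd (cycle_rel L.+3) v :\ v = segment 1 L.
  by apply/setP => i; rewrite !inE -val_eqE /= !cycle_relE /=; have := ltn_ord i; lia.
have path_seg a K : (a + K <= L.+2)%N -> path_on (cycle_rel L.+3) (segment a K).
  by move=> le_aK i j; rewrite !inE cycle_relE => Ii Ij; lia.
have dimSS : path_dim L.+2 = (path_dim L).+1 by rewrite /path_dim; lia.
apply: (hpoly_deg_isP (D := path_dim L.+2) (h := path_hpoly L.+2 + 'X * path_hpoly L)).
- move=> N; rewrite (poly_hilb irr) dimSS exprSr -mulrA.
  apply: eq_modXn_trans (eq_modXnMl _ (hser_del_closed irr (N := N) (in_setT v))) _.
  rewrite del_v del_closed_v mulrDr mulrA -exprSr -dimSS mulrCA.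
  apply: eq_modXnD; [|apply: eq_modXnMl].
  - by apply: (hser_segment irr (L := L.+2)); [lia | apply: path_seg; lia].
  - by apply: (hser_segment irr (L := L)); [lia | apply: path_seg; lia].
- by rewrite hornerD hornerM hornerX mul1r gt_eqF // addr_gt0 ?path_hpoly_at1_gt0.
change (L.+3 %/ 2)%N with (path_dim L.+2); apply: size_pred_eq => [|j lt_j].
  by rewrite coefD coefXM dimSS /= -dimSS; exact: cycle_top_neq0.
rewrite coefD coefXM coef_path_hpoly_gt // add0r.
by case: eqP => // _; apply: coef_path_hpoly_gt; rewrite dimSS in lt_j; lia.
Qed.

Close Scope ring_scope.

Theorem theorem4p5 :
  (forall (k : fieldType) (n : nat), (3 <= n)%N ->
     hpoly_deg_is (@hilb k n (cycle_rel n)) (n %/ 2)) /\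
  (forall (k : fieldType) (n : nat), (1 <= n)%N ->
     hpoly_deg_is (@hilb k n (path_rel n))
       (if (n %% 3 == 1)%N then ((n.+1) %/ 2).-1 else (n.+1) %/ 2)).
Proof. by split=> [k n | k n _]; [exact: hpoly_deg_cycle | exact: hpoly_deg_path]. Qed.
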